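(* For every real $x\ge6$, $$\sum_{n>x}\frac{1}{n\,\varphi(n)}<\frac{2.1}{x}.$$
   Context: $\varphi$ is Euler's totient function; the sum is over integers $n>x$. *)

From mathcomp Require Import ssreflect ssrfun ssrbool eqtype ssrnat prime.
From Stdlib Require Import Reals.
From Coquelicot Require Import Coquelicot.
Open Scope R_scope.

Definition tail_term (x : R) (n : nat) : R :=
  if Rlt_dec x (INR n) then / (INR n * INR (totient n)) else 0.

(* Since n / phi(n) = sum_{d | n} mu(d)^2 / phi(d), the tail
   S(k) = sum_{n > k} 1 / (n phi(n)) is at most
     sum_d mu(d)^2 / (d^2 phi(d)) * sum_{m > k/d} 1 / m^2,
   and sum_{m >= j} 1 / m^2 <= 2 / (2 j - 1) <= 1.65 / j.  Hence the divisors
   d > 100 contribute at most 1.65 S(100) / (k + 1), while the divisors d <= 100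
   contribute at most 2.065 / (k + 1): for 6 <= k < 75 by evaluating the finite
   sums with upward-rounded integer certificates, and for k >= 75 because then
   (k + 1) sum_{m > k/d} 1 / m^2 <= d + d^2 / 52.  The resulting inequality
   (k + 1) S(k) <= 2.065 + 1.65 S(100), used first at k = 100, gives
   (k + 1) S(k) <= 2.1, and k = floor x concludes. *)

From Stdlib Require Import Reals ZArith.
From Stdlib Require Lra.
From Coquelicot Require Import Coquelicot.
From mathcomp Require Import all_boot all_order all_algebra.
From mathcomp Require Import Rstruct ring lra zify.
Import Order.TTheory GRing.Theory Num.Theory.
Set Implicit Arguments.
Unset Strict Implicit.
Local Open Scope ring_scope.

(** * The weights mu(d)^2 / phi(d) *)

(* Testing [2 <= i <= n + 1] suffices for [n > 0]; the bounded form lets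
   [vm_compute] evaluate it. *)
Definition squarefree (n : nat) : bool :=
  all (fun i => ~~ (i * i %| n)%N) (iota 2 n).

Lemma squarefreeP n : (0 < n)%N ->
  reflect (forall i, (1 < i)%N -> ~~ (i * i %| n)%N) (squarefree n).
Proof.
move=> n_gt0; apply: (iffP allP) => [sqf_n i i_gt1 | sqf_n i].
  have [i_small | i_big] := ltnP i (2 + n).
    by apply: sqf_n; rewrite mem_iota i_gt1.
  apply/negP => /(dvdn_leq n_gt0); nia.
by rewrite mem_iota => /andP[i_gt1 _]; apply: sqf_n.
Qed.

Lemma squarefree_primeM p d : prime p -> ~~ (p %| d)%N -> (0 < d)%N ->
  squarefree (p * d) = squarefree d.
Proof.
move=> p_pr p_ndvd d_gt0.
have pd_gt0 : (0 < p * d)%N by rewrite muln_gt0 prime_gt0.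
apply/idP/idP => [/(squarefreeP pd_gt0) sqf | /(squarefreeP d_gt0) sqf].
  apply/(squarefreeP d_gt0) => i i_gt1; apply/negP => ii_dvd.
  by move/negP: (sqf i i_gt1); apply; apply: dvdn_mull.
apply/(squarefreeP pd_gt0) => i i_gt1; apply/negP => ii_dvd.
have [p_dvd_i | p_ndvd_i] := boolP (p %| i)%N.
  have : (p * p %| p * d)%N by exact: dvdn_trans (dvdn_mul p_dvd_i p_dvd_i) ii_dvd.
  by rewrite dvdn_pmul2l ?prime_gt0 // (negbTE p_ndvd).
have ii_p : coprime (i * i) p by rewrite coprimeMl andbb coprime_sym prime_coprime.
by move: ii_dvd; rewrite Gauss_dvdr //; apply/negP; exact: sqf.
Qed.

Definition sqf_inv_totient (d : nat) : R :=
  if squarefree d then ((totient d)%:R)^-1 else 0.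

Lemma sqf_inv_totient0 : sqf_inv_totient 0 = 0.
Proof. by rewrite /sqf_inv_totient invr0; case: squarefree. Qed.

Lemma sqf_inv_totient_ge0 d : 0 <= sqf_inv_totient d.
Proof. by rewrite /sqf_inv_totient; case: squarefree; rewrite ?invr_ge0. Qed.

Lemma sqf_inv_totient_le d : sqf_inv_totient d <= ((totient d)%:R)^-1.
Proof. by rewrite /sqf_inv_totient; case: squarefree; rewrite ?invr_ge0. Qed.

Lemma sqf_inv_totient_primeM p d : prime p -> ~~ (p %| d)%N -> (0 < d)%N ->
  sqf_inv_totient (p * d)%N = sqf_inv_totient d / (p.-1)%:R.
Proof.
move=> p_pr p_ndvd d_gt0; rewrite /sqf_inv_totient squarefree_primeM //.
case: squarefree; last by rewrite mul0r.
rewrite totient_coprime ?prime_coprime // totient_prime //.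
by rewrite natrM invfM mulrC.
Qed.

(** * n / phi(n) as a divisor sum *)

Lemma big_nat_dvd_mul (V : nmodType) p M (F : nat -> V) : (0 < p)%N ->
  \sum_(0 <= e < (p * M)%N | (p %| e)%N) F e = \sum_(0 <= d < M) F (p * d)%N.
Proof.
move=> p_gt0; elim: M => [|M IHM]; first by rewrite muln0 !big_geq.
rewrite big_nat_recr //= -IHM mulnS addnC.
rewrite (big_cat_nat (leq0n (p * M)) (leq_addr _ _)) /=; congr (_ + _).
rewrite big_ltn_cond; last by lia.
rewrite dvdn_mulr // big_nat_cond big1 ?addr0 //.
move=> e /andP[/andP[lo hi] /dvdnP[q e_eq]].
move: lo hi; rewrite e_eq (mulnC q p) -mulnSr !ltn_pmul2l //; lia.
Qed.

Definition sqf_divisor_sum (n : nat) : R :=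
  \sum_(0 <= d < n.+1 | (d %| n)%N) sqf_inv_totient d.

Lemma sqf_divisor_sum_widen n B : (0 < n)%N -> (n < B)%N ->
  \sum_(0 <= d < B | (d %| n)%N) sqf_inv_totient d = sqf_divisor_sum n.
Proof.
move=> n_gt0 n_lt_B; rewrite /sqf_divisor_sum !(big_mkcond (fun d => (d %| n)%N)).
rewrite (big_cat_nat (leq0n n.+1) n_lt_B) /= [X in _ + X]big_nat_cond [X in _ + X]big1 ?addr0 //.
by move=> d /andP[/andP[d_gt_n _] _]; case: ifP => // /(dvdn_leq n_gt0); lia.
Qed.

Lemma sum_pmul_divisors p m B : prime p -> ~~ (p %| m)%N -> (0 < m)%N ->
  (p * m < B)%N ->
  \sum_(0 <= d < B | (p %| d)%N && (d %/ p %| m)%N) sqf_inv_totient d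
  = sqf_divisor_sum m / (p.-1)%:R.
Proof.
move=> p_pr p_ndvd m_gt0 pm_lt_B; have p_gt0 := prime_gt0 p_pr.
set F := fun d => if (d %/ p %| m)%N then sqf_inv_totient d else 0.
have -> : \sum_(0 <= d < B | (p %| d)%N && (d %/ p %| m)%N) sqf_inv_totient d
          = \sum_(0 <= d < (p * B)%N | (p %| d)%N) F d.
  rewrite big_mkcondr !(big_mkcond (fun d => (p %| d)%N)) /=.
  rewrite (big_cat_nat (leq0n B) (leq_pmull B p_gt0)) /=.
  rewrite [X in _ + X]big_nat_cond [X in _ + X]big1 ?addr0 // => d /andP[/andP[d_ge _] _].
  case: ifP => // /dvdnP[q d_eq]; rewrite d_eq /F mulnK //.
  by case: ifP => // /(dvdn_leq m_gt0) q_le; nia.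
have m_lt_B : (m < B)%N by nia.
rewrite big_nat_dvd_mul // -(sqf_divisor_sum_widen m_gt0 m_lt_B) mulr_suml.
rewrite [RHS]big_mkcond; apply: eq_bigr => d _; rewrite /F mulKn //.
case: ifP => [d_dvd_m | _] //.
apply: sqf_inv_totient_primeM; rewrite ?(dvdn_gt0 m_gt0) //.
by apply: contra p_ndvd => /dvdn_trans; apply.
Qed.

Lemma sqf_divisor_sum_pmul_le p m n : prime p -> ~~ (p %| m)%N -> (0 < m)%N ->
  (0 < n)%N -> (p * m %| n)%N ->
  sqf_divisor_sum m * (1 + ((p.-1)%:R)^-1) <= sqf_divisor_sum n.
Proof.
move=> p_pr p_ndvd m_gt0 n_gt0 pm_dvd_n.
have pm_lt_n1 : (p * m < n.+1)%N by rewrite ltnS dvdn_leq.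
have m_lt_n1 : (m < n.+1)%N by apply: leq_ltn_trans pm_lt_n1; rewrite leq_pmull ?prime_gt0.
have m_dvd_n : (m %| n)%N by apply: dvdn_trans pm_dvd_n; apply: dvdn_mull.
rewrite mulrDr mulr1 -(sum_pmul_divisors p_pr p_ndvd m_gt0 pm_lt_n1).
rewrite -(sqf_divisor_sum_widen m_gt0 m_lt_n1).
rewrite /sqf_divisor_sum big_mkcond [X in _ + X]big_mkcond [X in _ <= X]big_mkcond.
rewrite -big_split /=; apply: ler_sum => d _.
have [d_dvd_m | d_ndvd_m] := boolP (d %| m)%N.
  have p_ndvd_d : ~~ (p %| d)%N by apply: contra p_ndvd => /dvdn_trans; apply.
  by rewrite (dvdn_trans d_dvd_m m_dvd_n) (negbTE p_ndvd_d) addr0.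
rewrite add0r; case: ifP => [/andP[/dvdnP[q ->]] | _].
  2: by case: ifP; rewrite ?sqf_inv_totient_ge0.
rewrite mulnK ?prime_gt0 // => q_dvd_m.
by rewrite (dvdn_trans _ pm_dvd_n) // mulnC dvdn_mul.
Qed.

(* In fact [n / phi n = sqf_divisor_sum n]; the inequality is all we need. *)
Lemma le_totient_sqf_divisor_sum n : (0 < n)%N ->
  n%:R <= (totient n)%:R * sqf_divisor_sum n.
Proof.
elim/ltn_ind: n => n IHn n_gt0.
have [n_le1 | n_gt1] := leqP n 1.
  have -> : n = 1%N by lia.
  rewrite /sqf_divisor_sum big_mkcond big_nat_recr //= big_nat1 /=.
  by rewrite /sqf_inv_totient /= invr1 add0r mulr1.
set p := pdiv n; set e := logn p n; set m := (n`_p^')%N.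
have p_pr : prime p := pdiv_prime n_gt1.
have p_gt0 := prime_gt0 p_pr.
have n_eq : n = (p ^ e * m)%N by rewrite -p_part partnC.
have e_gt0 : (0 < e)%N by rewrite logn_gt0 mem_primes p_pr n_gt0 pdiv_dvd.
have m_gt0 : (0 < m)%N := part_gt0 _ _.
have pe_m : coprime (p ^ e) m by rewrite -p_part coprime_partC.
have p_ndvd_m : ~~ (p %| m)%N by move: pe_m; rewrite coprime_pexpl // prime_coprime.
have m_lt_n : (m < n)%N.
  by rewrite [X in (_ < X)%N]n_eq ltn_Pmull // -(expn0 p) ltn_exp2l ?prime_gt1.
have pm_dvd_n : (p * m %| n)%N.
  by rewrite n_eq dvdn_mul // -{1}(expn1 p) dvdn_exp2l.
have phi_n : totient n = (p.-1 * p ^ e.-1 * totient m)%N.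
  by rewrite {1}n_eq totient_coprime // totient_pfactor.
set a : R := (p.-1)%:R.
have a_gt0 : 0 < a by rewrite ltr0n -ltnS prednK // prime_gt1.
have pe_eq : (p ^ e)%:R = a * (p ^ e.-1)%:R * (1 + a^-1) :> R.
  have p_eq : p%:R = a + 1 :> R by rewrite natr1 prednK.
  by rewrite -[in LHS](prednK e_gt0) expnS natrM p_eq; field; rewrite gt_eqF.
rewrite {1}n_eq natrM.
apply: le_trans (ler_wpM2l (ler0n _ _) (IHn m m_lt_n m_gt0)) _.
rewrite phi_n !natrM pe_eq -/a.
set c := a * (p ^ e.-1)%:R; set t : R := (totient m)%:R.
have -> : c * (1 + a^-1) * (t * sqf_divisor_sum m)
          = c * t * (sqf_divisor_sum m * (1 + a^-1)) by ring.
apply: ler_wpM2l; first by rewrite mulr_ge0 // mulr_ge0 // ltW.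
exact: sqf_divisor_sum_pmul_le.
Qed.

(** * Expanding the tail over divisors *)

Definition invsq (m : nat) : R := ((m * m)%:R)^-1.

Definition sum_invsq (j M : nat) : R := \sum_(j <= m < M) invsq m.

Definition tail_sum (k N : nat) : R :=
  \sum_(k.+1 <= n < N.+1) ((n * totient n)%:R)^-1.

Lemma invsq_ge0 m : 0 <= invsq m.
Proof. by rewrite invr_ge0. Qed.

Lemma invsqM a b : invsq (a * b)%N = invsq a * invsq b.
Proof. by rewrite /invsq -invfM -natrM mulnACA. Qed.

Lemma sum_invsq_ge0 j M : 0 <= sum_invsq j M.
Proof. by apply: sumr_ge0 => m _; apply: invsq_ge0. Qed.

Lemma tail_sum_ge0 k N : 0 <= tail_sum k N.
Proof. by apply: sumr_ge0 => n _; rewrite invr_ge0. Qed.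

Lemma inv_mul_totient_le n :
  ((n * totient n)%:R)^-1 <= invsq n * sqf_divisor_sum n.
Proof.
have [-> | n_gt0] := posnP n; first by rewrite /invsq !mul0n invr0 mul0r.
have x_gt0 : 0 < n%:R :> R by rewrite ltr0n.
have t_gt0 : 0 < (totient n)%:R :> R by rewrite ltr0n totient_gt0.
rewrite /invsq !natrM -(ler_pM2l (mulr_gt0 (mulr_gt0 x_gt0 x_gt0) t_gt0)).
have -> : n%:R * n%:R * (totient n)%:R * (n%:R * (totient n)%:R)^-1 = n%:R :> R.
  by field; rewrite !gt_eqF.
have -> : n%:R * n%:R * (totient n)%:R * ((n%:R * n%:R)^-1 * sqf_divisor_sum n)
          = (totient n)%:R * sqf_divisor_sum n :> R.
  by field; rewrite gt_eqF.
exact: le_totient_sqf_divisor_sum.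
Qed.

Lemma sum_invsq_multiples_le d k N : (0 < d)%N ->
  \sum_(k.+1 <= n < N.+1 | (d %| n)%N) invsq n
  <= invsq d * sum_invsq (k %/ d).+1 N.+1.
Proof.
move=> d_gt0.
rewrite (@big_nat_widenl _ _ _ k.+1 0) // (@big_nat_widen _ _ _ 0 N.+1 (d * N.+1)) ?leq_pmull //.
rewrite (eq_bigl (fun n => (d %| n)%N && ((k.+1 <= n) && (n < N.+1))%N)); last first.
  by move=> n; rewrite andbA.
rewrite big_mkcondr /= big_nat_dvd_mul // /sum_invsq mulr_sumr.
rewrite (@big_nat_widenl _ _ _ (k %/ d).+1 0) // big_mkcondr /=.
apply: ler_sum_nat => m _; case: ifP => [/andP[k_lt _] | _]; last first.
  by case: ifP; rewrite // mulr_ge0 ?invsq_ge0.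
by rewrite ltn_divLR // (mulnC m d) k_lt invsqM.
Qed.

Lemma invsq_le_telescope m : (0 < m)%N ->
  invsq m <= 2 / (2 * m%:R - 1) - 2 / (2 * m.+1%:R - 1).
Proof.
move=> m_gt0; rewrite /invsq natrM -[m.+1%:R]natr1.
have : 1 <= m%:R :> R by rewrite ler1n.
set x : R := m%:R => x_ge1.
have -> : 2 / (2 * x - 1) - 2 / (2 * (x + 1) - 1) = 4 / ((2 * x - 1) * (2 * x + 1)).
  by field; rewrite !gt_eqF //; lra.
rewrite ler_pdivlMr; last by apply: mulr_gt0; lra.
by rewrite mulrC ler_pdivrMr; [nra | apply: mulr_gt0; lra].
Qed.

Lemma sum_invsq_telescope j M : (0 < j)%N -> (j <= M)%N ->
  sum_invsq j M <= 2 / (2 * j%:R - 1) - 2 / (2 * M%:R - 1).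
Proof.
move=> j_gt0; elim: M => [|M IHM]; first by rewrite leqn0 => /eqP j0; rewrite j0 in j_gt0.
rewrite leq_eqVlt => /orP[/eqP <- | j_le_M]; first by rewrite /sum_invsq big_geq // subrr.
rewrite /sum_invsq big_nat_recr //= -/(sum_invsq j M).
have := IHM j_le_M; have := invsq_le_telescope (leq_trans j_gt0 j_le_M); lra.
Qed.

Lemma sum_invsq_scaled_le j M : (0 < j)%N -> sum_invsq j M * (2 * j%:R - 1) <= 2.
Proof.
move=> j_gt0; have j_ge1 : 1 <= j%:R :> R by rewrite ler1n.
rewrite -ler_pdivlMr; last by lra.
have [j_le_M | M_lt_j] := leqP j M.
  apply: le_trans (sum_invsq_telescope j_gt0 j_le_M) _.
  have : 1 <= M%:R :> R by rewrite ler1n (leq_trans j_gt0).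
  by move=> M_ge1; rewrite lerBlDr lerDl divr_ge0 //; lra.
by rewrite /sum_invsq big_geq ?(ltnW M_lt_j) // divr_ge0 //; lra.
Qed.

Lemma sum_invsq_split j L M : (j <= L)%N ->
  sum_invsq j M <= sum_invsq j L + sum_invsq L M.
Proof.
move=> j_le_L; have [M_le_L | L_lt_M] := leqP M L; last first.
  by rewrite /sum_invsq (big_cat_nat j_le_L (ltnW L_lt_M)).
rewrite [X in _ <= _ + X]/sum_invsq big_geq // addr0.
have [M_le_j | j_lt_M] := leqP M j.
  by rewrite {1}/sum_invsq big_geq //; apply: sum_invsq_ge0.
rewrite /sum_invsq (big_cat_nat (ltnW j_lt_M) M_le_L) /= lerDl.
exact: sum_invsq_ge0.
Qed.

Lemma sum_invsq_le_inv j M : (0 < j)%N -> sum_invsq j M <= 33 / 20 / j%:R.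
Proof.
move=> j_gt0; have [j_gt1 | j_le1] := ltnP 1 j.
  have j_ge2 : 2 <= j%:R :> R by rewrite ler_nat.
  rewrite ler_pdivlMr; last by lra.
  have := sum_invsq_scaled_le M j_gt0; nra.
have -> : j = 1%N by lia.
apply: le_trans (sum_invsq_split M (isT : (1 <= 3)%N)) _.
have := sum_invsq_scaled_le M (isT : (0 < 3)%N).
have -> : sum_invsq 1 3 = 5 / 4.
  by rewrite /sum_invsq big_nat_recr // big_nat1 /invsq /=; field.
rewrite invr1 mulr1; lra.
Qed.

(* Without [%R], the body would be read in [R_scope], the scope bound to [R]. *)
Definition divisor_tail (k N d : nat) : R :=
  (sqf_inv_totient d * invsq d * sum_invsq (k %/ d).+1 N.+1)%R.

Lemma divisor_tail_ge0 k N d : 0 <= divisor_tail k N d.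
Proof.
by rewrite mulr_ge0 ?mulr_ge0 ?sqf_inv_totient_ge0 ?invsq_ge0 ?sum_invsq_ge0.
Qed.

Lemma tail_sum_le k N : tail_sum k N <= \sum_(0 <= d < N.+1) divisor_tail k N d.
Proof.
apply: le_trans (_ : \sum_(k.+1 <= n < N.+1) \sum_(0 <= d < N.+1 | (d %| n)%N)
                       invsq n * sqf_inv_totient d <= _).
  apply: ler_sum_nat => n /andP[n_gt_k n_le_N].
  rewrite -mulr_sumr sqf_divisor_sum_widen //; first exact: inv_mul_totient_le.
  exact: leq_trans n_gt_k.
under eq_bigr => n _ do rewrite big_mkcond.
rewrite exchange_big_nat /=; apply: ler_sum_nat => d _.
have [-> | d_gt0] := posnP d.
  by rewrite /divisor_tail sqf_inv_totient0 !mul0r big1 // => n _; case: ifP; rewrite ?mulr0.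
rewrite -big_mkcond /= -mulr_suml mulrC /divisor_tail -mulrA.
apply: ler_wpM2l; [exact: sqf_inv_totient_ge0 | exact: sum_invsq_multiples_le].
Qed.

Lemma tail_sum_le_split k N D : tail_sum k N
  <= \sum_(0 <= d < D) divisor_tail k N d + \sum_(D <= d < N.+1) divisor_tail k N d.
Proof.
apply: le_trans (tail_sum_le k N) _.
have [D_le_N1 | N1_lt_D] := leqP D N.+1; first by rewrite (big_cat_nat (leq0n D) D_le_N1).
rewrite [X in _ <= _ + X]big_geq ?(ltnW N1_lt_D) // addr0.
rewrite (big_cat_nat (leq0n N.+1) (ltnW N1_lt_D)) /= lerDl.
by apply: sumr_ge0 => d _; apply: divisor_tail_ge0.
Qed.

(** * Divisors above 100 *)

Lemma scaled_divisor_tail_le k N d : (0 < d)%N ->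
  (k.+1)%:R * divisor_tail k N d <= 33 / 20 * ((d * totient d)%:R)^-1.
Proof.
move=> d_gt0; rewrite /divisor_tail /invsq !natrM.
set j := (k %/ d).+1.
have K_le : (k.+1)%:R <= j%:R * d%:R :> R by rewrite -natrM ler_nat ltn_ceil.
have T_le := sum_invsq_le_inv N.+1 (isT : (0 < j)%N).
have g_le := sqf_inv_totient_le d.
move: K_le T_le g_le (sum_invsq_ge0 j N.+1) (sqf_inv_totient_ge0 d).
set K : R := (k.+1)%:R; set J : R := j%:R; set D : R := d%:R.
set t : R := (totient d)%:R; set T := sum_invsq j N.+1; set g := sqf_inv_totient d.
move=> K_le T_le g_le T_ge0 g_ge0.
have D_gt0 : 0 < D by rewrite ltr0n.
have J_gt0 : 0 < J by rewrite ltr0n.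
have t_gt0 : 0 < t by rewrite ltr0n totient_gt0.
apply: le_trans (_ : K * (t^-1 * (D * D)^-1 * (33 / 20 / J)) <= _).
  apply: ler_wpM2l; first exact: ler0n.
  have DD_inv_ge0 : 0 <= (D * D)^-1 by rewrite invr_ge0 mulr_ge0 // ltW.
  apply: ler_pM => //; first exact: mulr_ge0.
  by apply: ler_wpM2r.
have -> : K * (t^-1 * (D * D)^-1 * (33 / 20 / J))
          = 33 / 20 * (D * t)^-1 * (K / (J * D)).
  by field; rewrite !gt_eqF.
rewrite -[X in _ <= X]mulr1; apply: ler_wpM2l.
  by apply: mulr_ge0; [lra | rewrite invr_ge0 mulr_ge0 // ltW].
by rewrite ler_pdivrMr ?mul1r // mulr_gt0.
Qed.

Lemma scaled_large_divisors_le k N D :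
  (k.+1)%:R * \sum_(D.+1 <= d < N.+1) divisor_tail k N d <= 33 / 20 * tail_sum D N.
Proof.
rewrite /tail_sum !mulr_sumr; apply: ler_sum_nat => d /andP[d_gt_D _].
exact: scaled_divisor_tail_le (leq_trans (ltn0Sn D) d_gt_D).
Qed.

(** * Divisors up to 100 *)

Section Certificates.
Local Open Scope Z_scope.

(* Each certificate divided by [scale] is an upper bound for the real number
   it stands for. *)
Definition scale : Z := 1000000.

Definition ceil_div (a b : Z) : Z := (a + b - 1) / b.

Definition sumZ (s : seq nat) (f : nat -> Z) : Z := foldr (fun i acc => f i + acc) 0 s.

Definition sqf_weight_cert (d : nat) : Z :=
  if squarefree d then ceil_div scale (Z.of_nat d * Z.of_nat d * Z.of_nat (totient d))
  else 0.

Definition invsq_cert (m : nat) : Z := ceil_div scale (Z.of_nat m * Z.of_nat m).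

(* [2 / 199] bounds the tail from 100 on, by [sum_invsq_scaled_le]. *)
Definition sum_invsq_cert (j : nat) : Z :=
  sumZ (iota j (100 - j)) invsq_cert + ceil_div (2 * scale) 199.

(* The tables avoid recomputing the certificates for every [k]. *)
Definition small_k_check : bool :=
  let W := map sqf_weight_cert (iota 0 101) in
  let V := map sum_invsq_cert (iota 0 101) in
  all (fun k => 200 * (Z.of_nat k.+1
                  * sumZ (iota 0 101) (fun d => nth 0 W d * nth 0 V (k %/ d).+1))
                <=? 413 * scale * scale) (iota 6 69).

Definition large_k_check : bool :=
  200 * sumZ (iota 0 101)
          (fun d => sqf_weight_cert d * (52 * Z.of_nat d + Z.of_nat d * Z.of_nat d))
  <=? 52 * 413 * scale.

Lemma ceil_div_spec a b : 0 < b -> a <= ceil_div a b * b.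
Proof.
move=> b_gt0; rewrite /ceil_div.
have := Z.div_mod (a + b - 1) b; have := Z.mod_pos_bound (a + b - 1) b b_gt0; lia.
Qed.

End Certificates.

Lemma small_k_check_ok : small_k_check.
Proof. by vm_compute. Qed.

Lemma large_k_check_ok : large_k_check.
Proof. by vm_compute. Qed.

Lemma IZR_of_nat n : IZR (Z.of_nat n) = n%:R.
Proof. by rewrite -INR_IZR_INZ INRE. Qed.

Lemma IZR_sumZ s f : IZR (sumZ s f) = \sum_(i <- s) IZR (f i).
Proof.
elim: s => [|i s IHs] /=; first by rewrite big_nil.
by rewrite plus_IZR RplusE IHs big_cons.
Qed.

Lemma IZR_leb (a b : Z) : Z.leb a b -> IZR a <= IZR b.
Proof. by move=> /Z.leb_le ab; apply/RleP; apply: IZR_le. Qed.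

Lemma IZR_gt0 (a : Z) : Z.lt 0 a -> 0 < IZR a.
Proof. by move=> a_gt0; apply/RltP; apply: IZR_lt. Qed.

Lemma scale_gt0 : 0 < IZR scale.
Proof. exact: IZR_gt0. Qed.

Lemma le_ceil_div (a b : Z) : Z.lt 0 b -> IZR a / IZR b <= IZR (ceil_div a b).
Proof.
move=> b_gt0; rewrite ler_pdivrMr ?IZR_gt0 // -RmultE -mult_IZR.
by apply/RleP; apply: IZR_le; apply: ceil_div_spec.
Qed.

Lemma inv_le_ceil_div_scale (x : Z) : Z.lt 0 x ->
  (IZR x)^-1 <= IZR (ceil_div scale x) / IZR scale.
Proof.
move=> x_gt0; rewrite ler_pdivlMr ?scale_gt0 // mulrC; exact: le_ceil_div.
Qed.

Lemma IZR_mulE (a b : Z) : IZR (Z.mul a b) = IZR a * IZR b.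
Proof. exact: mult_IZR. Qed.

Lemma sqf_weight_cert_bound d :
  sqf_inv_totient d * invsq d <= IZR (sqf_weight_cert d) / IZR scale.
Proof.
have [-> | d_gt0] := posnP d.
  by rewrite sqf_inv_totient0 mul0r (_ : IZR (sqf_weight_cert 0) = 0) // mul0r.
rewrite /sqf_inv_totient /sqf_weight_cert; case: squarefree; last first.
  by rewrite mul0r (_ : IZR Z0 = 0) // mul0r.
rewrite /invsq -invfM -natrM mulnC -IZR_of_nat !Nat2Z.inj_mul.
have := totient_gt0 d; rewrite d_gt0 => phi_gt0.
by apply: inv_le_ceil_div_scale; nia.
Qed.

Lemma invsq_cert_bound m : (0 < m)%N -> invsq m <= IZR (invsq_cert m) / IZR scale.
Proof.
move=> m_gt0; rewrite /invsq -IZR_of_nat Nat2Z.inj_mul.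
by apply: inv_le_ceil_div_scale; nia.
Qed.

Lemma sum_invsq_cert_bound j M : (0 < j)%N -> (j <= 100)%N ->
  sum_invsq j M <= IZR (sum_invsq_cert j) / IZR scale.
Proof.
move=> j_gt0 j_le100; have s_gt0 := scale_gt0.
apply: le_trans (sum_invsq_split M j_le100) _.
rewrite /sum_invsq_cert plus_IZR RplusE mulrDl IZR_sumZ mulr_suml.
apply: lerD.
  rewrite /sum_invsq /index_iota big_seq [X in _ <= X]big_seq.
  apply: ler_sum => m; rewrite mem_iota => /andP[m_ge_j _].
  exact: invsq_cert_bound (leq_trans j_gt0 m_ge_j).
have := sum_invsq_scaled_le M (isT : (0 < 100)%N).
have := @le_ceil_div (Z.mul 2 scale) 199 erefl.
rewrite IZR_mulE (_ : IZR 199 = 199%:R) ?(IZR_of_nat 199) //.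
set c := IZR (ceil_div _ _); set s := IZR scale; set T := sum_invsq 100 M.
move=> c_ge T_le; rewrite ler_pdivlMr //; apply: le_trans c_ge.
by rewrite [2 * s / 199]mulrAC ler_pM2r // ler_pdivlMr; lra.
Qed.

Lemma nth_table (f : nat -> Z) n : (n < 101)%N -> nth Z0 (map f (iota 0 101)) n = f n.
Proof. by move=> n_lt; rewrite (nth_map 0%N) ?size_iota // nth_iota. Qed.

Lemma scaled_small_divisors_le_moderate k N : (6 <= k)%N -> (k < 75)%N ->
  (k.+1)%:R * \sum_(0 <= d < 101) divisor_tail k N d <= 413 / 200.
Proof.
move=> k_ge6 k_lt75; have s_gt0 := scale_gt0.
have k_in : k \in iota 6 69 by rewrite mem_iota k_ge6; lia.
move: small_k_check_ok; rewrite /small_k_check => /allP /(_ k k_in) /IZR_leb.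
rewrite !IZR_mulE IZR_of_nat IZR_sumZ (_ : IZR 200 = 200%:R) ?(IZR_of_nat 200) //.
rewrite (_ : IZR 413 = 413%:R) ?(IZR_of_nat 413) //.
rewrite (eq_big_seq (fun d => IZR (sqf_weight_cert d) * IZR (sum_invsq_cert (k %/ d).+1))).
  2: by move=> d; rewrite mem_iota => /andP[_ d_lt]; rewrite IZR_mulE !nth_table // ltnS;
     apply: leq_trans (leq_div _ _) _; lia.
set X := \sum_(_ <- _) _; set s := IZR scale => X_le.
apply: le_trans (_ : (k.+1)%:R * (X / (s * s)) <= _).
  apply: ler_wpM2l; first exact: ler0n.
  rewrite /X mulr_suml /index_iota subn0 big_seq [X in _ <= X]big_seq.
  apply: ler_sum => d; rewrite mem_iota => /andP[_ d_lt].
  rewrite invfM mulrACA.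
  apply: ler_pM; rewrite ?mulr_ge0 ?sqf_inv_totient_ge0 ?invsq_ge0 ?sum_invsq_ge0 //.
    exact: sqf_weight_cert_bound.
  by apply: sum_invsq_cert_bound; rewrite // ltnS (leq_trans (leq_div _ _)) //; lia.
by rewrite mulrA ler_pdivrMr; [lra | apply: mulr_gt0].
Qed.

Lemma scaled_sum_invsq_le_large k d M : (75 <= k)%N -> (0 < d)%N -> (d <= 100)%N ->
  (k.+1)%:R * sum_invsq (k %/ d).+1 M <= d%:R + d%:R * d%:R / 52.
Proof.
move=> k_ge75 d_gt0 d_le100; set j := (k %/ d).+1.
have T_le := sum_invsq_scaled_le M (isT : (0 < j)%N).
have K_le : (k.+1)%:R <= j%:R * d%:R :> R by rewrite -natrM ler_nat ltn_ceil.
have K_ge : 76 <= (k.+1)%:R :> R by rewrite ler_nat.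
have D_ge1 : 1 <= d%:R :> R by rewrite ler1n.
have D_le : d%:R <= 100 :> R by rewrite ler_nat.
move: T_le K_le K_ge D_ge1 D_le (sum_invsq_ge0 j M).
set T := sum_invsq j M; set K : R := (k.+1)%:R; set J : R := j%:R; set D : R := d%:R.
move=> T_le K_le K_ge D_ge1 D_le T_ge0.
have TK : T * (2 * K - D) <= 2 * D.
  apply: le_trans (_ : T * (2 * J * D - D) <= _); first by apply: ler_wpM2l; lra.
  by rewrite (_ : T * (2 * J * D - D) = D * (T * (2 * J - 1))); [nra | ring].
rewrite -(@ler_pM2r _ (2 * K - D)); last by lra.
apply: le_trans (_ : 2 * K * D <= _).
  rewrite -[K * T * _]mulrA (_ : 2 * K * D = K * (2 * D)); last by ring.
  by apply: ler_wpM2l; lra.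
have : 0 <= D * D * (2 * K - D - 52) by rewrite !mulr_ge0 //; lra.
have -> : (D + D * D / 52) * (2 * K - D) = 2 * K * D + D * D * (2 * K - D - 52) / 52.
  by field.
lra.
Qed.

Lemma scaled_small_divisors_le_large k N : (75 <= k)%N ->
  (k.+1)%:R * \sum_(0 <= d < 101) divisor_tail k N d <= 413 / 200.
Proof.
move=> k_ge75; have s_gt0 := scale_gt0.
move: large_k_check_ok; rewrite /large_k_check => /IZR_leb.
rewrite !IZR_mulE IZR_sumZ (_ : IZR 200 = 200%:R) ?(IZR_of_nat 200) //.
rewrite (_ : IZR 52 = 52%:R) ?(IZR_of_nat 52) // (_ : IZR 413 = 413%:R) ?(IZR_of_nat 413) //.
under eq_bigr => d _ do rewrite IZR_mulE plus_IZR RplusE !IZR_mulE IZR_of_nat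
                              (_ : IZR 52 = 52%:R) ?(IZR_of_nat 52) //.
set X := \sum_(_ <- _) _; set s := IZR scale => X_le.
apply: le_trans (_ : X / (52 * s) <= _); last first.
  by rewrite ler_pdivrMr; [lra | apply: mulr_gt0].
rewrite /X mulr_sumr mulr_suml /index_iota subn0 big_seq [X in _ <= X]big_seq.
apply: ler_sum => d; rewrite mem_iota => /andP[_ d_lt].
have [-> | d_gt0] := posnP d; first by rewrite /divisor_tail sqf_inv_totient0 !mul0r mulr0.
have -> : IZR (sqf_weight_cert d) * (52 * d%:R + d%:R * d%:R) / (52 * s)
          = IZR (sqf_weight_cert d) / s * (d%:R + d%:R * d%:R / 52).
  by field; rewrite gt_eqF.
rewrite /divisor_tail mulrCA mulrA -[_ * (k.+1)%:R * _]mulrA.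
apply: ler_pM; rewrite ?mulr_ge0 ?sqf_inv_totient_ge0 ?invsq_ge0 ?sum_invsq_ge0 //.
  exact: sqf_weight_cert_bound.
exact: scaled_sum_invsq_le_large.
Qed.

Lemma scaled_small_divisors_le k N : (6 <= k)%N ->
  (k.+1)%:R * \sum_(0 <= d < 101) divisor_tail k N d <= 413 / 200.
Proof.
move=> k_ge6; have [k_lt75 | k_ge75] := ltnP k 75.
  exact: scaled_small_divisors_le_moderate.
exact: scaled_small_divisors_le_large.
Qed.

Lemma scaled_tail_sum_le_rec k N : (6 <= k)%N ->
  (k.+1)%:R * tail_sum k N <= 413 / 200 + 33 / 20 * tail_sum 100 N.
Proof.
move=> k_ge6; apply: le_trans (ler_wpM2l (ler0n _ _) (tail_sum_le_split k N 101)) _.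
rewrite mulrDr; apply: lerD; first exact: scaled_small_divisors_le.
exact: scaled_large_divisors_le.
Qed.

(* At [k = 100] the recursion bounds [tail_sum 100 N] by [413 / 200 / (101 - 33 / 20)]. *)
Lemma scaled_tail_sum_le k N : (6 <= k)%N -> (k.+1)%:R * tail_sum k N <= 21 / 10.
Proof.
move=> k_ge6; have := scaled_tail_sum_le_rec N (isT : (6 <= 100)%N).
have := scaled_tail_sum_le_rec N k_ge6; have := tail_sum_ge0 100 N; lra.
Qed.

Lemma tail_sum_le_inv k N : (6 <= k)%N -> tail_sum k N <= 21 / 10 / (k.+1)%:R.
Proof. by move=> k_ge6; rewrite ler_pdivlMr ?ltr0n // mulrC scaled_tail_sum_le. Qed.

Lemma sum_n_bigop (a : nat -> R) N : sum_n a N = \sum_(0 <= n < N.+1) a n.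
Proof.
elim: N => [|N IHN]; first by rewrite sum_O big_nat1.
by rewrite sum_Sn IHN [RHS]big_nat_recr.
Qed.

Local Open Scope R_scope.

Lemma series_nonneg_bounded (a : nat -> R) (B : R) :
  (forall n, 0 <= a n) -> (forall N, sum_n a N <= B) -> ex_series a /\ Series a <= B.
Proof.
move=> a_ge0 sum_le.
have sum_incr : forall N, sum_n a N <= sum_n a N.+1.
  by move=> N; rewrite sum_Sn /plus /=; have := a_ge0 N.+1; Lra.lra.
have [l sum_lim] := ex_finite_lim_seq_incr _ B sum_incr sum_le.
split; first by exists l.
rewrite /Series (is_lim_seq_unique _ _ sum_lim) /=.
exact: is_lim_seq_le _ _ _ _ sum_le sum_lim (is_lim_seq_const B).
Qed.

Lemma tail_term_ge0 x n : 0 <= tail_term x n.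
Proof.
rewrite /tail_term; case: Rlt_dec => [x_lt_n | x_ge_n]; last exact: Rle_refl.
apply/RleP; rewrite invr_ge0; apply/RleP; apply: Rmult_le_pos; exact: pos_INR.
Qed.

Lemma sum_n_tail_term x k N : INR k <= x < INR k + 1 -> sum_n (tail_term x) N = tail_sum k N.
Proof.
move=> [k_le_x x_lt_k1]; rewrite sum_n_bigop /tail_sum.
rewrite (@big_nat_widenl _ _ _ k.+1 0) // big_mkcondr /=; apply: eq_bigr => n _.
rewrite /tail_term; case: Rlt_dec => [x_lt_n | x_ge_n]; case: (ltnP k n) => [k_lt_n | n_le_k].
- by rewrite /= RinvE RmultE !INRE -natrM.
- by have := le_INR _ _ (ssrnat.leP n_le_k); Lra.lra.
- by have := le_INR _ _ (ssrnat.leP k_lt_n); rewrite S_INR; Lra.lra.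
- by [].
Qed.

Theorem mainTheorem16 (x : R) (hx : 6 <= x) :
  ex_series (tail_term x) /\ Series (tail_term x) < 2.1 / x.
Proof.
have [k [k_le_x x_lt_k1]] : {k : nat | INR k <= x < INR k + 1}.
  by apply: nfloor_ex; Lra.lra.
have k_ge6 : (6 <= k)%N.
  apply/ssrnat.ltP; apply: INR_lt; rewrite [INR 5]/=; Lra.lra.
have partial_le N : sum_n (tail_term x) N <= 21 / 10 / (INR k + 1).
  rewrite (sum_n_tail_term N (conj k_le_x x_lt_k1)) -S_INR INRE.
  by apply/RleP; rewrite !RdivE !IZRposE !INRE; exact: tail_sum_le_inv.
have [tail_ex tail_le] := series_nonneg_bounded (tail_term_ge0 x) partial_le.
split => //; apply: Rle_lt_trans tail_le _.
have : / (INR k + 1) < / x by apply: Rinv_lt_contravar; [apply: Rmult_lt_0_compat|]; Lra.lra.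
rewrite /Rdiv /Q2R /=; Lra.lra.
Qed.
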